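(* Let $D$ be a weighted digraph and let $\nu$ be the number of vertices of a longest directed path in $D$. If $\nu$ is odd, then $\mathrm{mac}(D)\ge\left(\frac14+\frac{1}{4\nu}\right)w(D)$; if $\nu$ is even, then $\mathrm{mac}(D)\ge\left(\frac14+\frac{1}{4(\nu-1)}\right)w(D)$.
   Context: A weighted digraph $D=(V,A,w)$ is a digraph without loops or parallel arcs (opposite arcs allowed) with weights $w:A\to\mathbb{R}_{\ge0}$; $w(D)$ is the total arc weight. For a partition $(X,Y)$ of $V$, $w(X,Y)$ is the total weight of arcs from $X$ to $Y$, and $\mathrm{mac}(D)=\max_{(X,Y)}w(X,Y)$ over all partitions. *)

From mathcomp Require Import all_boot all_order all_algebra.
Set Implicit Arguments. Unset Strict Implicit. Unset Printing Implicit Defensive.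
Import Order.TTheory GRing.Theory Num.Theory.
Local Open Scope ring_scope.

(* A weighted digraph on a finite vertex set V: arc relation [arc]
   (no loops: irreflexive; parallel arcs impossible since a relation;
   opposite arcs allowed), weights [w] on ordered pairs (only values on arcs
   are used). *)

Definition total_weight (R : numDomainType) (V : finType) (arc : rel V)
  (w : V -> V -> R) : R :=
  \sum_(u : V) \sum_(v : V | arc u v) w u v.

Definition cut_weight (R : numDomainType) (V : finType) (arc : rel V)
  (w : V -> V -> R) (X Y : {set V}) : R :=
  \sum_(u in X) \sum_(v in Y | arc u v) w u v.

Definition mac (R : realDomainType) (V : finType) (arc : rel V)
  (w : V -> V -> R) : R :=
  \big[Num.max/0]_(X : {set V}) cut_weight arc w X (~: X).

Definition dipath (V : finType) (arc : rel V) (s : seq V) : bool :=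
  (size s > 0)%N && uniq s && sorted arc s.

Definition longest_path_order (V : finType) (arc : rel V) (nu : nat) : Prop :=
  (exists s, dipath arc s /\ size s = nu) /\
  (forall s, dipath arc s -> (size s <= nu)%N).

From mathcomp Require Import all_boot all_order all_algebra.
From mathcomp Require Import ring lra zify.
Set Implicit Arguments. Unset Strict Implicit. Unset Printing Implicit Defensive.
Import Order.TTheory GRing.Theory Num.Theory.

(* The proof has two independent parts.
   1. Gallai-Roy: D has a proper colouring with nu colours.  Take a maximal
      acyclic spanning subdigraph A of D; every arc of D is an arc of A or is
      reversed by a walk of A.  Colouring a vertex by the number of arcs of a
      longest path of A ending at it is proper, because this height strictly
      increases along every non-trivial walk of A, and it is < nu.
   2. Averaging: given a proper colouring with k colours, cut D along the
      vertex set coloured by a uniformly random set of s colours.  Each arc is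
      cut with probability C(k-2, s-1)/C(k, s) = s(k-s)/(k(k-1)), so some cut
      has at least that fraction of w(D).  Choosing s = floor(k/2) with k = nu
      gives 1/4 + 1/(4 nu) for odd nu and 1/4 + 1/(4 (nu-1)) for even nu.
   The averaging is an identity between sums. *)

Section GallaiRoy.
Variable V : finType.

Lemma connect_add_arc (e : rel V) u v a b :
  connect (fun x y => ((x, y) == (u, v)) || e x y) a b ->
  connect e a b \/ (connect e a u /\ connect e v b).
Proof.
case/connectP => p; elim: p a => [|y p IH] a /=; first by move=> _ ->; left.
case/andP => /orP [/eqP [-> ->] | eay] Hp Hb; case: (IH _ Hp Hb) => [H | [H1 H2]].
- by right.
- by right.
- by left; apply: connect_trans (connect1 eay) H.
- by right; split => //; apply: connect_trans (connect1 eay) H1.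
Qed.

Lemma path_connect_last (e : rel V) x p y :
  path e x p -> y \in x :: p -> connect e y (last x p).
Proof.
elim: p x y => [|z p IH] x y /=; first by move=> _; rewrite inE => /eqP ->.
case/andP => exz Hp; rewrite inE => /orP [/eqP -> | Hy]; last exact: IH Hy.
exact: connect_trans (connect1 exz) (IH z z Hp (mem_head _ _)).
Qed.

Definition setrel (A : {set V * V}) : rel V := fun a b => (a, b) \in A.

Definition acyclic_sub (arc : rel V) (A : {set V * V}) : bool :=
  [forall x, forall y, ((x, y) \in A) ==>
     arc x y && ~~ connect (setrel A) y x].

Lemma acyclic_subP (arc : rel V) A x y :
  acyclic_sub arc A -> (x, y) \in A -> arc x y && ~~ connect (setrel A) y x.
Proof. by move/forallP/(_ x)/forallP/(_ y)/implyP. Qed.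

Lemma acyclic_sub_add (arc : rel V) A u v :
  acyclic_sub arc A -> arc u v -> ~~ connect (setrel A) v u ->
  acyclic_sub arc ((u, v) |: A).
Proof.
move=> acA auv nvu.
have conn1 : connect (setrel ((u, v) |: A)) =2
             connect (fun x y => ((x, y) == (u, v)) || setrel A x y).
  by move=> a b; apply: eq_connect => a' b'; rewrite /setrel in_setU1.
apply/forallP => x; apply/forallP => y; apply/implyP.
rewrite in_setU1 conn1 => /orP [/eqP [-> ->] | Axy].
  by rewrite auv; apply/negP => /connect_add_arc [|[]] cvu; rewrite cvu in nvu.
have /andP [axy nyx] := acyclic_subP acA Axy.
rewrite axy; apply/negP => /connect_add_arc [cyx | [cyu cvx]].
  by rewrite cyx in nyx.
have cvu : connect (setrel A) v u.
  by apply: connect_trans cvx (connect_trans (connect1 Axy) cyu).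
by rewrite cvu in nvu.
Qed.

Lemma maximal_acyclic_sub (arc : rel V) : exists A : {set V * V},
  acyclic_sub arc A /\
  forall u v, arc u v -> ((u, v) \in A) || connect (setrel A) v u.
Proof.
have ac0 : acyclic_sub arc set0.
  by apply/forallP => x; apply/forallP => y; rewrite inE.
case: (arg_maxnP (fun A : {set V * V} => #|A|) ac0) => A acA maxA.
exists A; split=> // u v auv; apply/negPn/negP; rewrite negb_or => /andP [nA nvu].
have := maxA _ (acyclic_sub_add acA auv nvu).
by rewrite cardsU1 nA /= ltnn.
Qed.

Section Height.
Variables (e : rel V) (nu : nat).
Hypothesis e_acyclic : forall x y, e x y -> ~~ connect e y x.
Hypothesis e_bounded : forall s, dipath e s -> (size s <= nu)%N.

Definition ends_path (v : V) (k : nat) : bool :=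
  [exists x : V, [exists t : k.-tuple V,
     path e x t && uniq (x :: t) && (last x t == v)]].

Lemma ends_path0 v : ends_path v 0.
Proof. by apply/existsP; exists v; apply/existsP; exists [tuple]; rewrite /= eqxx. Qed.

Lemma ends_path_lt v k : ends_path v k -> (k < nu)%N.
Proof.
case/existsP=> x /existsP [t /andP [/andP [pt ut] _]].
have := @e_bounded (x :: t); rewrite /dipath ut /= pt size_tuple; exact.
Qed.

(* A path ending at [u] extends along an arc (u, v): acyclicity prevents [v]
   from already lying on it. *)
Lemma ends_path_step u v k : e u v -> ends_path u k -> ends_path v k.+1.
Proof.
move=> euv /existsP [x /existsP [t /andP [/andP [pt ut] /eqP lt]]].
have vnot : v \notin x :: t.
  apply/negP => /(path_connect_last pt); rewrite lt => cvu.
  by have := e_acyclic euv; rewrite cvu.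
have t1 : size (rcons t v) == k.+1 by rewrite size_rcons size_tuple.
apply/existsP; exists x; apply/existsP; exists (Tuple t1).
rewrite /= rcons_path pt lt euv last_rcons eqxx andbT /=.
by rewrite -/(uniq (x :: rcons t v)) -rcons_cons rcons_uniq vnot ut.
Qed.

Definition height (v : V) : nat :=
  ex_maxn (ex_intro _ 0%N (ends_path0 v)) (fun k h => ltnW (ends_path_lt h)).

Lemma height_lt v : (height v < nu)%N.
Proof. by rewrite /height; case: ex_maxnP => k /ends_path_lt. Qed.

Lemma height_arc u v : e u v -> (height u < height v)%N.
Proof.
move=> euv; rewrite [height v]/height; case: ex_maxnP => k _ maxk.
by apply: maxk; apply: ends_path_step euv _; rewrite /height; case: ex_maxnP.
Qed.

Lemma height_connect u v : connect e u v -> u != v -> (height u < height v)%N.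
Proof.
case/connectP => p pp -> {v}; case: p pp => [|z p] pp; first by rewrite eqxx.
move=> _; pose lt_h := fun a b => (height a < height b)%N.
have lt_h_trans : transitive lt_h by move=> b a c; apply: ltn_trans.
have hp : path lt_h u (z :: p) by apply: sub_path pp => a b /height_arc.
have /allP := order_path_min lt_h_trans hp; apply.
by rewrite /= mem_last.
Qed.

End Height.

(* Gallai-Roy: a digraph whose longest directed path has [nu] vertices is
   properly coloured by the heights in a maximal acyclic subdigraph. *)
Theorem gallai_roy (arc : rel V) (nu : nat) :
  irreflexive arc -> longest_path_order arc nu ->
  exists c : V -> 'I_nu, forall u v, arc u v -> c u != c v.
Proof.
move=> irr [_ longest].
have [A [acA maxA]] := maximal_acyclic_sub arc.
have A_acyclic x y : setrel A x y -> ~~ connect (setrel A) y x.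
  by move/(acyclic_subP acA)/andP => [].
have A_bounded s : dipath (setrel A) s -> (size s <= nu)%N.
  case/andP=> [/andP [s0 us] ps]; apply: longest; rewrite /dipath s0 us.
  by apply: sub_sorted ps => x y /(acyclic_subP acA)/andP [].
exists (fun v => Ordinal (height_lt A_bounded v)) => u v auv.
have neq : u != v by apply/eqP => eq_uv; rewrite eq_uv irr in auv.
rewrite -(inj_eq val_inj) /=.
case/orP: (maxA _ _ auv) => [Auv | cvu].
  by rewrite neq_ltn height_arc.
by rewrite eq_sym neq_ltn height_connect // eq_sym.
Qed.

End GallaiRoy.

(* Among the [m.+1]-subsets of a finite type, those containing [a] but not
   [b] are counted by [m]-subsets of the remaining elements. *)
Lemma card_separating_sets (T : finType) (a b : T) m : a != b ->
  #|[set S : {set T} | (#|S| == m.+1) && (a \in S) && (b \notin S)]|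
  = 'C(#|T| - 2, m).
Proof.
move=> ab.
have notin_ab (S' : {set T}) x :
    S' \subset ~: [set a; b] -> x \in [set a; b] -> x \notin S'.
  by move=> sub xab; apply/negP => /(subsetP sub); rewrite inE xab.
have -> : [set S : {set T} | (#|S| == m.+1) && (a \in S) && (b \notin S)] =
   (fun S' => a |: S') @: [set S' : {set T} | S' \subset ~: [set a; b] & #|S'| == m].
  apply/setP => S; rewrite inE; apply/idP/imsetP.
    case/andP => [/andP [/eqP cS aS] bS]; exists (S :\ a); last by rewrite setD1K.
    rewrite inE; apply/andP; split.
      apply/subsetP => x; rewrite !inE => /andP [xa xS]; rewrite negb_or xa /=.
      by apply: contraNneq bS => <-.
    by have := cardsD1 a S; rewrite aS cS add1n => -[<-].
  case => S'; rewrite inE => /andP [sub /eqP cS'] ->.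
  have aS' := notin_ab _ a sub (set21 a b).
  have bS' := notin_ab _ b sub (set22 a b).
  by rewrite cardsU1 aS' cS' eqxx setU11 /= in_setU1 negb_or bS' eq_sym ab.
rewrite card_in_imset; last first.
  move=> S1 S2; rewrite !inE => /andP [s1 _] /andP [s2 _] e.
  have aS1 := notin_ab _ a s1 (set21 a b).
  have aS2 := notin_ab _ a s2 (set21 a b).
  by rewrite -(setU1K aS1) e setU1K.
rewrite cards_draws; congr 'C(_, _).
by have := cardsC [set a; b]; rewrite cards2 ab => <-; rewrite addKn.
Qed.

Local Open Scope ring_scope.

Lemma cut_le_mac (R : realDomainType) (V : finType) (arc : rel V)
    (w : V -> V -> R) X :
  cut_weight arc w X (~: X) <= mac arc w.
Proof.
rewrite /mac; elim: (index_enum _) (mem_index_enum X) => // Y r IH.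
by rewrite inE big_cons le_max => /orP [/eqP <- | /IH ->]; rewrite ?lexx ?orbT.
Qed.

Section Averaging.
Variables (R : realFieldType) (V : finType) (arc : rel V) (w : V -> V -> R).

(* Averaging over the cuts induced by the [m.+1]-sets of colours of a proper
   colouring with [n.+2] colours: every arc is cut by exactly 'C(n, m) of the
   'C(n.+2, m.+1) colour sets. *)
Lemma colour_average n m (c : V -> 'I_n.+2) :
  (forall u v, arc u v -> c u != c v) ->
  'C(n, m)%:R * total_weight arc w <= 'C(n.+2, m.+1)%:R * mac arc w.
Proof.
move=> proper.
pose X (S : {set 'I_n.+2}) := [set v | c v \in S].
pose draws := [set S : {set 'I_n.+2} | #|S| == m.+1].
have cutE S : cut_weight arc w (X S) (~: X S) =
   \sum_u \sum_(v | arc u v) (if (c u \in S) && (c v \notin S) then w u v else 0).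
  rewrite /cut_weight big_mkcond; apply: eq_bigr => u _; rewrite inE.
  case: (c u \in S) => /=; last by rewrite big1.
  rewrite big_mkcond [RHS]big_mkcond; apply: eq_bigr => v _.
  by rewrite !inE; case: (c v \in S); case: (arc u v).
have sum_cuts : \sum_(S in draws) cut_weight arc w (X S) (~: X S) =
                'C(n, m)%:R * total_weight arc w.
  rewrite (eq_bigr _ (fun S _ => cutE S)) exchange_big /total_weight mulr_sumr.
  apply: eq_bigr => u _; rewrite exchange_big mulr_sumr.
  apply: eq_bigr => v auv; rewrite -big_mkcondr.
  rewrite (eq_bigl (mem [set S : {set 'I_n.+2} |
                          (#|S| == m.+1) && (c u \in S) && (c v \notin S)])).
    by rewrite sumr_const card_separating_sets ?proper // card_ord subn2 mulr_natl.
  by move=> S; rewrite !inE andbA.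
have card_draws_n : #|draws| = 'C(n.+2, m.+1) by rewrite card_draws card_ord.
rewrite -sum_cuts -card_draws_n mulr_natl -sumr_const.
by apply: ler_sum => S _; apply: cut_le_mac.
Qed.

End Averaging.

(* The fraction of the cuts separating two given colours. *)
Lemma binomial_ratio (R : realFieldType) n m : (m <= n.+1)%N ->
  'C(n, m)%:R / 'C(n.+2, m.+1)%:R =
  (m.+1)%:R * (n.+1 - m)%:R / ((n.+2)%:R * (n.+1)%:R) :> R.
Proof.
move=> le_mn.
have diag := mul_bin_diag n.+2 m; have down := mul_bin_down n.+1 m.
have nat_id : ('C(n.+2, m.+1) * (m.+1 * (n.+1 - m)) =
               'C(n, m) * (n.+2 * n.+1))%N.
  rewrite mulnA (mulnC _ m.+1) -diag /= -mulnA (mulnC _ (n.+1 - m)%N) -down /=.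
  by rewrite mulnA mulnC.
have C_gt0 : 'C(n.+2, m.+1)%:R != 0 :> R by rewrite pnatr_eq0 -lt0n bin_gt0.
apply/eqP; rewrite eqr_div // ?mulf_neq0 ?pnatr_eq0 //.
by rewrite -!natrM -nat_id mulnC.
Qed.

Lemma mac_colouring_bound (R : realFieldType) (V : finType) (arc : rel V)
    (w : V -> V -> R) n m (c : V -> 'I_n.+2) :
  (forall u v, arc u v -> c u != c v) -> (m <= n.+1)%N ->
  (m.+1)%:R * (n.+1 - m)%:R / ((n.+2)%:R * (n.+1)%:R) * total_weight arc w
    <= mac arc w.
Proof.
move=> proper le_mn; rewrite -binomial_ratio //.
have C_gt0 : 0 < 'C(n.+2, m.+1)%:R :> R by rewrite ltr0n bin_gt0.
rewrite mulrAC ler_pdivrMr // [mac _ _ * _]mulrC.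
exact: colour_average proper.
Qed.

Lemma ratio_odd (R : realFieldType) m :
  (m.+1)%:R * (m.*2.+2 - m)%:R / ((m.*2.+3)%:R * (m.*2.+2)%:R)
  = 4%:R^-1 + (4%:R * (m.*2.+3)%:R)^-1 :> R.
Proof.
rewrite (_ : (m.*2.+2 - m)%N = m.+2); last by lia.
have m_ge0 := ler0n R m; rewrite -muln2 -!natr1 natrM.
by field; rewrite !gt_eqF; lra.
Qed.

Lemma ratio_even (R : realFieldType) m :
  (m.+1)%:R * (m.*2.+1 - m)%:R / ((m.*2.+2)%:R * (m.*2.+1)%:R)
  = 4%:R^-1 + (4%:R * ((m.*2.+2)%:R - 1))^-1 :> R.
Proof.
rewrite (_ : (m.*2.+1 - m)%N = m.+1); last by lia.
have m_ge0 := ler0n R m; rewrite -muln2 -!natr1 natrM.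
by field; rewrite !gt_eqF; lra.
Qed.

Theorem mainTheorem3 (R : realFieldType) (V : finType) (arc : rel V)
  (w : V -> V -> R) (nu : nat) :
  irreflexive arc ->
  (forall u v, arc u v -> 0 <= w u v) ->
  longest_path_order arc nu ->
  (odd nu ->
     mac arc w >= (4%:R^-1 + (4%:R * nu%:R)^-1) * total_weight arc w) /\
  (~~ odd nu ->
     mac arc w >= (4%:R^-1 + (4%:R * (nu%:R - 1))^-1) * total_weight arc w).
Proof.
move=> irr _ longest; have [c proper] := gallai_roy irr longest.
case: nu longest c proper => [|[|n]] longest c proper.
- (* a one-vertex path exists, so [nu > 0] *)
  by case: longest.1 => s [/andP [/andP [s_gt0 _] _] s0]; rewrite s0 in s_gt0.
- (* one colour: there are no arcs, so both sides vanish *)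
  have mac_ge0 : 0 <= mac arc w.
    by have := cut_le_mac arc w set0; rewrite /cut_weight big_set0.
  have W0 : total_weight arc w = 0.
    rewrite /total_weight big1 // => u _; rewrite big1 // => v /proper.
    by rewrite !ord1 eqxx.
  by rewrite W0 mulr0.
-
  have [m [def_n | def_n]] : exists m, n = m.*2.+1 \/ n = m.*2.
    by exists n./2; rewrite -{1 3}(odd_double_half n); case: (odd n); [left|right].
  + subst n; split; rewrite /= odd_double //= => _.
    by rewrite -ratio_odd; apply: mac_colouring_bound proper _; lia.
  + subst n; split; rewrite /= odd_double //= => _.
    by rewrite -ratio_even; apply: mac_colouring_bound proper _; lia.
Qed.
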